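(* Let $p,q$ satisfy $\frac1p+\frac1q=1$, and let $(\hat f(j,k))_{(j,k)\in\mathbb{Z}^2}\in \ell^q(\mathbb{Z}^2)$. Define, for $(j,k)\in\mathbb{Z}^2$ with $2j\neq\pm k$, $\hat u(j,k)=\frac{\hat f(j,k)}{4j^2-k^2}$, and let \[ u(x,t)=\sum_{(j,k)\in\mathbb{Z}^2,\ 2j\neq \pm k}\hat u(j,k)e^{2ijx+ikt}. \] Then $u\in C^{\gamma}$ for every $\gamma$ with $0<\gamma<1-\frac1p$.
   Context: $\ell^q=\{(\hat u(j,k))_{(j,k)\in\mathbb{Z}^2}:\sum_{(j,k)}|\hat u(j,k)|^q<\infty\}$. $C^\gamma$ denotes the space of $\gamma$-Hölder continuous functions of $(x,t)$, $\pi$-periodic in $x$ and $2\pi$-periodic in $t$. *)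

From Stdlib Require Import Reals ZArith.
From Coquelicot Require Import Coquelicot.
Open Scope R_scope.

(* a^s for a >= 0 and s > 0, with the convention 0^s = 0 *)
Definition rpow (a s : R) : R := if Rle_dec a 0 then 0 else Rpower a s.

Definition zsum (N : nat) (g : Z -> C) : C :=
  sum_n (fun a : nat => g (Z.of_nat a - Z.of_nat N)%Z) (2 * N).

Definition zsumR (N : nat) (g : Z -> R) : R :=
  sum_n (fun a : nat => g (Z.of_nat a - Z.of_nat N)%Z) (2 * N).

(* f in l^q(Z^2): sum of |f(j,k)|^q over Z^2 is finite
   (nonnegative terms: square partial sums are bounded) *)
Definition in_lq_Z2 (q : R) (f : Z -> Z -> C) : Prop :=
  exists M : R, forall N : nat,
    zsumR N (fun j => zsumR N (fun k => rpow (Cmod (f j k)) q)) <= M.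

Definition cexpi (theta : R) : C := (cos theta, sin theta).

(* \hat u(j,k) = \hat f(j,k)/(4j^2-k^2) if 2j <> +-k; these indices are
   excluded from the sum (coefficient set to 0 there). *)
Definition resonant (j k : Z) : bool :=
  (Z.eqb (2 * j) k || Z.eqb (2 * j) (- k))%bool.

Definition uhat (f : Z -> Z -> C) (j k : Z) : C :=
  if resonant j k then 0%C
  else Cdiv (f j k) (RtoC (IZR (4 * j * j - k * k)%Z)).

Definition u_partial (f : Z -> Z -> C) (N : nat) (x t : R) : C :=
  zsum N (fun j => zsum N (fun k =>
    Cmult (uhat f j k) (cexpi (2 * IZR j * x + IZR k * t)))).

Definition holder (gamma : R) (u : R -> R -> C) : Prop :=
  exists K : R, 0 <= K /\ forall x t x' t' : R,
    Cmod (Cminus (u x t) (u x' t')) <=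
      K * rpow (sqrt ((x - x') ^ 2 + (t - t') ^ 2)) gamma.

Definition C_gamma (gamma : R) (u : R -> R -> C) : Prop :=
  holder gamma u /\
  (forall x t, u (x + PI) t = u x t) /\
  (forall x t, u x (t + 2 * PI) = u x t).

From Pilot Require Import Defs.
From Stdlib Require Import Reals ZArith List Lra Lia Psatz.
From Stdlib Require FinFun.
From Stdlib Require Import ClassicalEpsilon FunctionalExtensionality.
From Coquelicot Require Import Coquelicot.
Open Scope R_scope.

(* Writing [m = 4j^2 - k^2 = (2j - k)(2j + k)], Young's inequality gives
     |uhat(j,k)| |m|^g = |f(j,k)| |m|^(g-1) <= |f(j,k)|^q + |2j - k|^(-s) |2j + k|^(-s)
   with [s = (1 - g) p > 1] exactly when [g < 1 - 1/p].  Since [(j,k) |-> (2j - k, 2j + k)]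
   is injective, the last term is summable over Z^2, so [sum |uhat| |m|^g < oo].
   With [g = 0] this gives absolute convergence of the square partial sums.  For
   Hölder continuity, [|e^(ia) - e^(ib)| <= 2 |a - b|^g] and the phase difference of
   the mode (j,k) is at most [2 |m| |(x,t) - (x',t')|], so each mode contributes at
   most [4 |uhat| |m|^g |(x,t) - (x',t')|^g]. *)

Lemma rpow_Rpower a s : 0 < a -> rpow a s = Rpower a s.
Proof. intros Ha; unfold rpow; destruct (Rle_dec a 0); [lra | reflexivity]. Qed.

Lemma rpow_0_l s : rpow 0 s = 0.
Proof. unfold rpow; destruct (Rle_dec 0 0); [reflexivity | lra]. Qed.

Lemma rpow_nonneg a s : 0 <= rpow a s.
Proof. unfold rpow; destruct (Rle_dec a 0); [lra | left; apply exp_pos]. Qed.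

Lemma rpow_le_compat_l a b s : 0 <= s -> 0 <= a <= b -> rpow a s <= rpow b s.
Proof.
  intros Hs [[Ha | <-] Hab].
  - rewrite !rpow_Rpower by lra; apply Rle_Rpower_l; lra.
  - rewrite rpow_0_l; apply rpow_nonneg.
Qed.

Lemma rpow_mult_distr a b s : 0 <= a -> 0 <= b -> rpow (a * b) s = rpow a s * rpow b s.
Proof.
  intros [Ha | <-] [Hb | <-]; rewrite ?Rmult_0_l, ?Rmult_0_r, ?rpow_0_l; try ring.
  rewrite !rpow_Rpower by nra; symmetry; apply Rpower_mult_distr; lra.
Qed.

Lemma Rpower_mult_pred z e : 0 < z -> z * Rpower z (e - 1) = Rpower z e.
Proof.
  intros Hz; rewrite <- (Rpower_1 z) at 1 by lra.
  rewrite <- Rpower_plus; f_equal; ring.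
Qed.

(* For conjugate exponents [(q - 1) (p - 1) = 1]; hence either [y <= x^(q-1)],
   and [x y <= x^q], or [x <= y^(p-1)], and [x y <= y^p]. *)
Lemma young_rpow p q x y : 0 < p -> 0 < q -> / p + / q = 1 -> 0 <= x -> 0 < y ->
  x * y <= rpow x q + Rpower y p.
Proof.
  intros Hp Hq Hpq [Hx | <-] Hy.
  2:{ rewrite rpow_0_l; pose proof (exp_pos (p * ln y)); unfold Rpower in *; lra. }
  assert (Hpq' : p * q = p + q) by (rewrite <- (Rmult_1_r (p * q)), <- Hpq; field; lra).
  assert (Hconj : (q - 1) * (p - 1) = 1) by nra.
  rewrite rpow_Rpower by lra.
  destruct (Rle_dec y (Rpower x (q - 1))) as [Hyx | Hyx].
  - rewrite <- (Rpower_mult_pred x q) by lra.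
    pose proof (exp_pos (p * ln y)); unfold Rpower in *; nra.
  - assert (Hxy : x <= Rpower y (p - 1)).
    { replace x with (Rpower (Rpower x (q - 1)) (p - 1)) at 1
        by (rewrite Rpower_mult, Hconj; apply Rpower_1; lra).
      apply Rle_Rpower_l; [nra | split; [apply exp_pos | lra]]. }
    rewrite <- (Rpower_mult_pred y p) by lra.
    pose proof (exp_pos (q * ln x)); unfold Rpower in *; nra.
Qed.

(* [ln z <= z - 1] at [z = x / (x + 1)] gives [ln (x + 1) - ln x >= 1 / (x + 1)];
   conclude with [exp u >= 1 + u]. *)
Lemma Rpower_sub_succ_ge s x : 1 < s -> 0 < x ->
  (s - 1) * Rpower (x + 1) (- s) <= Rpower x (1 - s) - Rpower (x + 1) (1 - s).
Proof.
  intros Hs Hx; set (y := x + 1).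
  assert (Hy : 0 < y) by (unfold y; lra).
  assert (Hlog : / y <= ln y - ln x).
  { pose proof (exp_ineq1_le (ln (x / y))) as H.
    rewrite exp_ln, ln_div in H by (try apply Rdiv_lt_0_compat; lra).
    replace (x / y) with (1 - / y) in H by (unfold y; field; lra); lra. }
  assert (Ex : Rpower x (1 - s) = Rpower y (1 - s) * exp ((s - 1) * (ln y - ln x)))
    by (unfold Rpower; rewrite <- exp_plus; f_equal; ring).
  assert (Ey : Rpower y (- s) = Rpower y (1 - s) * / y).
  { replace (- s) with ((1 - s) + - (1)) by ring.
    rewrite Rpower_plus, Rpower_Ropp, Rpower_1 by lra; reflexivity. }
  rewrite Ex, Ey.
  pose proof (exp_ineq1_le ((s - 1) * (ln y - ln x))).
  assert (0 < Rpower y (1 - s)) by apply exp_pos.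
  assert ((s - 1) * / y <= (s - 1) * (ln y - ln x)) by (apply Rmult_le_compat_l; lra).
  nra.
Qed.

Lemma Cmod_cexpi a : Cmod (cexpi a) = 1.
Proof.
  unfold Cmod, cexpi; cbn [fst snd].
  rewrite <- !Rsqr_pow2, Rplus_comm, sin2_cos2; apply sqrt_1.
Qed.

Lemma Rabs_sin_sub_le a b : Rabs (sin a - sin b) <= Rabs (a - b).
Proof.
  destruct (MVT_abs sin cos b a) as [c [Hc _]]; [intros; apply derivable_pt_lim_sin |].
  rewrite Hc; pose proof (COS_bound c); pose proof (Rabs_pos (a - b)).
  assert (Rabs (cos c) <= 1) by (apply Rabs_le; lra); nra.
Qed.

Lemma Rabs_cos_sub_le a b : Rabs (cos a - cos b) <= Rabs (a - b).
Proof.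
  destruct (MVT_abs cos (fun x => - sin x) b a) as [c [Hc _]]; [intros; apply derivable_pt_lim_cos |].
  rewrite Hc, Rabs_Ropp; pose proof (SIN_bound c); pose proof (Rabs_pos (a - b)).
  assert (Rabs (sin c) <= 1) by (apply Rabs_le; lra); nra.
Qed.

Lemma cexpi_dist_le a b : Cmod (Cminus (cexpi a) (cexpi b)) <= 2 * Rabs (a - b).
Proof.
  eapply Rle_trans; [apply Cmod_2Rmax |]; cbn [fst snd cexpi Cminus Cplus Copp].
  apply Rmult_le_compat.
  - apply sqrt_pos.
  - eapply Rle_trans; [apply Rabs_pos | apply Rmax_l].
  - rewrite <- (sqrt_square 2) at 2 by lra; apply sqrt_le_1_alt; lra.
  - apply Rmax_lub; [apply Rabs_cos_sub_le | apply Rabs_sin_sub_le].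
Qed.

Lemma cexpi_dist_le_rpow a b g : 0 < g <= 1 ->
  Cmod (Cminus (cexpi a) (cexpi b)) <= 2 * rpow (Rabs (a - b)) g.
Proof.
  intros Hg; set (w := Rabs (a - b)).
  pose proof (cexpi_dist_le a b) as Hlip; fold w in Hlip.
  destruct (Rle_lt_dec w 0) as [Hw | Hw].
  { pose proof (Rabs_pos (a - b)); pose proof (rpow_nonneg w g); lra. }
  rewrite rpow_Rpower by lra.
  destruct (Rle_dec w 1) as [Hw1 | Hw1].
  - assert (w <= Rpower w g).
    { rewrite <- (Rpower_mult_pred w g) by lra.
      assert (0 <= (g - 1) * ln w).
      { assert (ln w <= 0) by (rewrite <- ln_1; apply ln_le; lra); nra. }
      pose proof (exp_ineq1_le ((g - 1) * ln w)); unfold Rpower; nra. }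
    lra.
  - assert (1 <= Rpower w g) by (rewrite <- (Rpower_O w) by lra; apply Rle_Rpower; lra).
    unfold Cminus; eapply Rle_trans; [apply Cmod_triangle |].
    rewrite Cmod_opp, !Cmod_cexpi; lra.
Qed.

Lemma cexpi_add_2PI_mult a n : cexpi (a + 2 * IZR n * PI) = cexpi a.
Proof.
  unfold cexpi; destruct (Z_le_gt_dec 0 n) as [Hn | Hn].
  - rewrite <- (Z2Nat.id n Hn), <- INR_IZR_INZ, cos_period, sin_period; reflexivity.
  - rewrite <- (cos_period _ (Z.to_nat (- n))), <- (sin_period _ (Z.to_nat (- n))).
    rewrite INR_IZR_INZ, Z2Nat.id, opp_IZR by lia.
    replace (a + 2 * IZR n * PI + 2 * - IZR n * PI) with a by ring; reflexivity.
Qed.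

(** * Square partial sums over Z^2 *)

(* [zsum] and [zsumR] of [Defs] are the instances of [zsumA] at [C] and [R]. *)
Definition zsumA {G : AbelianMonoid} (N : nat) (g : Z -> G) : G :=
  sum_n (fun a : nat => g (Z.of_nat a - Z.of_nat N)%Z) (2 * N).

Definition zsum2 {G : AbelianMonoid} (N : nat) (h : Z -> Z -> G) : G :=
  zsumA N (fun j => zsumA N (h j)).

Section ZsumMonoid.
Context {G : AbelianMonoid}.

Lemma zsumA_S N (g : Z -> G) :
  zsumA (S N) g = plus (g (- Z.of_nat (S N))%Z) (plus (zsumA N g) (g (Z.of_nat (S N)))).
Proof.
  unfold zsumA; replace (2 * S N)%nat with (S (S (2 * N))) by lia.
  rewrite sum_Sn; unfold sum_n; rewrite sum_Sn_m by lia.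
  rewrite <- sum_n_m_S, plus_assoc.
  apply f_equal2; [apply f_equal2 | f_equal; lia].
  - f_equal; lia.
  - apply sum_n_m_ext; intros n; f_equal; lia.
Qed.

Lemma zsumA_ext N (g g' : Z -> G) : (forall z, g z = g' z) -> zsumA N g = zsumA N g'.
Proof. intros H; apply sum_n_ext; intros; apply H. Qed.

Lemma zsumA_plus N (g g' : Z -> G) :
  zsumA N (fun z => plus (g z) (g' z)) = plus (zsumA N g) (zsumA N g').
Proof. apply sum_n_plus. Qed.

Lemma zsum2_plus N (h h' : Z -> Z -> G) :
  zsum2 N (fun j k => plus (h j k) (h' j k)) = plus (zsum2 N h) (zsum2 N h').
Proof. unfold zsum2; rewrite <- zsumA_plus; apply zsumA_ext; intros; apply zsumA_plus. Qed.

(* The terms added when the square [-N..N]^2 grows to [-(N+1)..N+1]^2. *)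
Definition zborder (N : nat) (h : Z -> Z -> G) : G :=
  plus (zsumA (S N) (fun j => plus (h j (- Z.of_nat (S N))%Z) (h j (Z.of_nat (S N)))))
       (plus (zsumA N (h (- Z.of_nat (S N))%Z)) (zsumA N (h (Z.of_nat (S N))))).

Lemma zsum2_S N (h : Z -> Z -> G) : zsum2 (S N) h = plus (zsum2 N h) (zborder N h).
Proof.
  assert (Hswap : forall a b c : G, plus a (plus b c) = plus b (plus a c))
    by (intros; rewrite !plus_assoc, (plus_comm a b); reflexivity).
  unfold zsum2, zborder.
  rewrite (zsumA_ext _ _ (fun j => plus (plus (h j (- Z.of_nat (S N))%Z) (h j (Z.of_nat (S N))))
                                        (zsumA N (h j)))).
  2:{ intros j; rewrite zsumA_S, Hswap, plus_comm; reflexivity. }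
  rewrite zsumA_plus, (zsumA_S N (fun j => zsumA N (h j))).
  rewrite (Hswap (zsumA N (h _))), (Hswap (zsumA (S N) _)); reflexivity.
Qed.

End ZsumMonoid.

Lemma zsumA_opp {G : AbelianGroup} N (g : Z -> G) :
  zsumA N (fun z => opp (g z)) = opp (zsumA N g).
Proof.
  unfold zsumA; induction (2 * N)%nat as [| n IH];
    [rewrite !sum_O; reflexivity | rewrite !sum_Sn, IH, opp_plus; reflexivity].
Qed.

Lemma zsum2_minus {G : AbelianGroup} N (h h' : Z -> Z -> G) :
  zsum2 N (fun j k => minus (h j k) (h' j k)) = minus (zsum2 N h) (zsum2 N h').
Proof.
  unfold minus; rewrite zsum2_plus; f_equal; unfold zsum2.
  rewrite <- zsumA_opp; apply zsumA_ext; intros; apply zsumA_opp.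
Qed.

Lemma zsumA_le N (g g' : Z -> R) : (forall z, g z <= g' z) -> zsumA N g <= zsumA N g'.
Proof. intros H; apply sum_n_m_le; intros; apply H. Qed.

Lemma zsumA_nonneg N (g : Z -> R) : (forall z, 0 <= g z) -> 0 <= zsumA N g.
Proof.
  intros H; apply Rle_trans with (sum_n_m (fun _ => 0) 0 (2 * N)).
  - rewrite (@sum_n_m_const_zero R_AbelianMonoid); apply Rle_refl.
  - apply sum_n_m_le; intros; apply H.
Qed.

Lemma zsum2_le N (h h' : Z -> Z -> R) : (forall j k, h j k <= h' j k) -> zsum2 N h <= zsum2 N h'.
Proof. intros H; apply zsumA_le; intros; apply zsumA_le; auto. Qed.

Lemma zsum2_nonneg N (h : Z -> Z -> R) : (forall j k, 0 <= h j k) -> 0 <= zsum2 N h.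
Proof. intros H; apply zsumA_nonneg; intros; apply zsumA_nonneg; auto. Qed.

Lemma zsum2_scal_l N c (h : Z -> Z -> R) : zsum2 N (fun j k => c * h j k) = c * zsum2 N h.
Proof.
  unfold zsum2, zsumA; rewrite <- (@sum_n_mult_l R_Ring).
  apply sum_n_ext; intros; apply (@sum_n_mult_l R_Ring).
Qed.

Lemma zsum2_mult N (g g' : Z -> R) : zsum2 N (fun a b => g a * g' b) = zsumA N g * zsumA N g'.
Proof.
  unfold zsum2, zsumA.
  rewrite (sum_n_ext _ (fun a => g (Z.of_nat a - Z.of_nat N)%Z *
                                  sum_n (fun b => g' (Z.of_nat b - Z.of_nat N)%Z) (2 * N))).
  - apply (@sum_n_mult_r R_Ring).
  - intros; apply (@sum_n_mult_l R_Ring).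
Qed.

Lemma zborder_nonneg N (h : Z -> Z -> R) : (forall j k, 0 <= h j k) -> 0 <= zborder N h.
Proof.
  intros H; unfold zborder; change plus with Rplus.
  assert (0 <= zsumA (S N) (fun j => h j (- Z.of_nat (S N))%Z + h j (Z.of_nat (S N)))).
  { apply zsumA_nonneg; intros z.
    pose proof (H z (- Z.of_nat (S N))%Z); pose proof (H z (Z.of_nat (S N))); lra. }
  pose proof (zsumA_nonneg N _ (H (- Z.of_nat (S N))%Z)).
  pose proof (zsumA_nonneg N _ (H (Z.of_nat (S N)))); lra.
Qed.

Lemma zsum2_le_add N d (h : Z -> Z -> R) : (forall j k, 0 <= h j k) -> zsum2 N h <= zsum2 (N + d) h.
Proof.
  intros H; induction d as [| d IH]; [rewrite Nat.add_0_r; lra |].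
  rewrite Nat.add_succ_r, zsum2_S; change plus with Rplus.
  pose proof (zborder_nonneg (N + d) h H); lra.
Qed.

Section ZsumNorm.
Context {K : AbsRing} {V : NormedModule K}.

Lemma norm_zsumA_le N (g : Z -> V) : norm (zsumA N g) <= zsumA N (fun z => norm (g z)).
Proof. apply norm_sum_n_m. Qed.

Lemma norm_zsum2_le N (h : Z -> Z -> V) : norm (zsum2 N h) <= zsum2 N (fun j k => norm (h j k)).
Proof.
  eapply Rle_trans; [apply norm_zsumA_le |]; apply zsumA_le; intros; apply norm_zsumA_le.
Qed.

Lemma norm_zborder_le N (h : Z -> Z -> V) : norm (zborder N h) <= zborder N (fun j k => norm (h j k)).
Proof.
  unfold zborder at 2; change (@plus R_AbelianMonoid) with Rplus.
  eapply Rle_trans; [apply norm_triangle | apply Rplus_le_compat].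
  - eapply Rle_trans; [apply norm_zsumA_le |]; apply zsumA_le; intros; apply norm_triangle.
  - eapply Rle_trans; [apply norm_triangle |]; apply Rplus_le_compat; apply norm_zsumA_le.
Qed.

Lemma norm_zsum2_sub_le N d (h : Z -> Z -> V) :
  norm (minus (zsum2 (N + d) h) (zsum2 N h)) <=
  zsum2 (N + d) (fun j k => norm (h j k)) - zsum2 N (fun j k => norm (h j k)).
Proof.
  induction d as [| d IH].
  - rewrite Nat.add_0_r, Rminus_diag, minus_eq_zero; apply Req_le, norm_zero.
  - rewrite Nat.add_succ_r, !zsum2_S; change (@plus R_AbelianMonoid) with Rplus.
    replace (minus (plus (zsum2 (N + d) h) (zborder (N + d) h)) (zsum2 N h)) with
      (plus (minus (zsum2 (N + d) h) (zsum2 N h)) (zborder (N + d) h)).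
    2:{ unfold minus; rewrite <- !plus_assoc, (plus_comm (zborder _ _)); reflexivity. }
    eapply Rle_trans; [apply norm_triangle |].
    pose proof (norm_zborder_le (N + d) h); lra.
Qed.

End ZsumNorm.

Section Limits.
Context {K : AbsRing} {V : NormedModule K}.

Lemma lim_norm_minus_le (a b : nat -> V) (A B : V) c :
  filterlim a eventually (locally A) -> filterlim b eventually (locally B) ->
  (forall n, norm (minus (a n) (b n)) <= c) -> norm (minus A B) <= c.
Proof.
  intros Ha Hb Hc.
  assert (Hd : filterlim (fun n => minus (a n) (b n)) eventually (locally (minus A B))).
  { apply (filterlim_comp_2 (H := locally (opp B)) a (fun n => opp (b n)) plus Ha).
    - exact (filterlim_comp _ _ _ b opp eventually (locally B) (locally (opp B)) Hb (filterlim_opp B)).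
    - exact (filterlim_plus A (opp B)). }
  exact (closed_filterlim _ (fun r => r <= c) _
           (filterlim_comp _ _ _ _ norm _ _ _ Hd (filterlim_norm _)) Hc (closed_le c)).
Qed.

Lemma filterlim_ext_unique (a b : nat -> V) (A B : V) : (forall n, a n = b n) ->
  filterlim a eventually (locally A) -> filterlim b eventually (locally B) -> A = B.
Proof.
  intros Hab Ha Hb; exact (filterlim_locally_unique b A B (filterlim_ext a b Hab Ha) Hb).
Qed.

End Limits.

(* The real sums [zsum2 N |h|] increase and are bounded, hence Cauchy, and by
   [norm_zsum2_sub_le] they control the increments of [zsum2 N h]. *)
Lemma zsum2_cvg {K : AbsRing} {V : CompleteNormedModule K} (h : Z -> Z -> V) B :
  (forall N, zsum2 N (fun j k => norm (h j k)) <= B) ->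
  exists y, filterlim (fun N => zsum2 N h) eventually (locally y).
Proof.
  intros HB.
  set (a N := zsum2 N (fun j k => norm (h j k))).
  assert (Ha : forall N d, a N <= a (N + d)%nat).
  { intros N d; unfold a; apply zsum2_le_add; intros; exact (norm_ge_0 _). }
  assert (Hcauchy : ex_lim_seq_cauchy a).
  { apply ex_lim_seq_cauchy_corr, (ex_finite_lim_seq_incr _ B); [| exact HB].
    intros N; rewrite <- Nat.add_1_r; apply Ha. }
  apply (proj1 (filterlim_locally_cauchy (U := CompleteNormedModule.CompleteSpace K V)
                 (F := eventually) (fun N => zsum2 N h))); intros eps.
  destruct (Hcauchy eps) as [N0 HN0].
  exists (fun N => (N0 <= N)%nat); split; [exists N0; auto |].
  assert (Hle : forall m n, (N0 <= m)%nat -> (m <= n)%nat ->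
                  norm (minus (zsum2 n h) (zsum2 m h)) < eps).
  { intros m n Hm Hmn; replace n with (m + (n - m))%nat by lia.
    eapply Rle_lt_trans;
      [exact (norm_zsum2_sub_le (V := CompleteNormedModule.NormedModule K V) m (n - m) h) |].
    specialize (HN0 (m + (n - m))%nat m ltac:(lia) Hm); fold (a m) (a (m + (n - m))%nat).
    apply Rabs_lt_between in HN0; lra. }
  intros m n Hm Hn; apply (norm_compat1 (V := CompleteNormedModule.NormedModule K V)).
  destruct (le_lt_dec m n) as [Hmn | Hnm]; [now apply Hle |].
  rewrite <- norm_opp, opp_minus; apply Hle; lia.
Qed.

(** * Comparison of a square sum with a reindexed one *)

Definition lsumR {X : Type} (l : list X) (g : X -> R) : R := fold_right Rplus 0 (map g l).

Lemma lsumR_app {X : Type} (l l' : list X) g : lsumR (l ++ l') g = lsumR l g + lsumR l' g.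
Proof. unfold lsumR; induction l as [| x l IH]; simpl; [ring | rewrite IH; ring]. Qed.

Lemma lsumR_map {X Y : Type} (phi : X -> Y) l g : lsumR (map phi l) g = lsumR l (fun x => g (phi x)).
Proof. unfold lsumR; rewrite map_map; reflexivity. Qed.

Lemma lsumR_nonneg {X : Type} (l : list X) g : (forall x, 0 <= g x) -> 0 <= lsumR l g.
Proof. intros H; unfold lsumR; induction l as [| x l IH]; simpl; [lra | pose proof (H x); lra]. Qed.

Lemma lsumR_le_incl {X : Type} (l l' : list X) g : (forall x, 0 <= g x) ->
  NoDup l -> incl l l' -> lsumR l g <= lsumR l' g.
Proof.
  intros Hg Hl; revert l'; induction Hl as [| x l Hx Hl IH]; intros l' Hincl.
  - apply lsumR_nonneg, Hg.
  - destruct (in_split x l' (Hincl x (or_introl eq_refl))) as [u [v ->]].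
    assert (lsumR l g <= lsumR (u ++ v) g).
    { apply IH; intros y Hy; specialize (Hincl y (or_intror Hy)).
      apply in_app_or in Hincl; apply in_or_app.
      destruct Hincl as [? | [<- | ?]]; [left | contradiction | right]; assumption. }
    rewrite lsumR_app in *; unfold lsumR in *; simpl in *; lra.
Qed.

Lemma lsumR_list_prod {X Y : Type} (l : list X) (l' : list Y) (h : X -> Y -> R) :
  lsumR l (fun x => lsumR l' (h x)) = lsumR (list_prod l l') (fun xy => h (fst xy) (snd xy)).
Proof.
  induction l as [| x l IH]; [reflexivity |].
  cbn [list_prod]; rewrite lsumR_app, lsumR_map, <- IH; reflexivity.
Qed.

Lemma NoDup_list_prod {X Y : Type} (l : list X) (l' : list Y) :
  NoDup l -> NoDup l' -> NoDup (list_prod l l').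
Proof.
  intros Hl Hl'; induction Hl as [| x l Hx Hl IH]; simpl; [constructor |].
  apply NoDup_app;
    [apply FinFun.Injective_map_NoDup; [intros ? ? E; injection E; auto | exact Hl'] | exact IH |].
  intros [a b] Hab Hab'; apply in_map_iff in Hab as [? [E _]]; injection E as <- _.
  apply in_prod_iff in Hab' as [? _]; contradiction.
Qed.

Definition zrange (N : nat) : list Z := map (fun a => Z.of_nat a - Z.of_nat N)%Z (seq 0 (S (2 * N))).

Lemma In_zrange N z : In z (zrange N) <-> (- Z.of_nat N <= z <= Z.of_nat N)%Z.
Proof.
  unfold zrange; rewrite in_map_iff; split.
  - intros [a [<- Ha]]; apply in_seq in Ha; lia.
  - intros Hz; exists (Z.to_nat (z + Z.of_nat N)); rewrite in_seq; lia.
Qed.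

Lemma NoDup_zrange N : NoDup (zrange N).
Proof. apply FinFun.Injective_map_NoDup; [intros a b E; lia | apply seq_NoDup]. Qed.

Lemma zsumA_lsumR N (g : Z -> R) : zsumA N g = lsumR (zrange N) g.
Proof.
  unfold zsumA, zrange; rewrite lsumR_map; generalize (2 * N)%nat as n; intros n.
  induction n as [| n IH].
  - rewrite sum_O; unfold lsumR; simpl; ring.
  - rewrite sum_Sn, IH, (seq_S (S n)), lsumR_app, Nat.add_0_l.
    unfold lsumR at 3; cbn [map fold_right]; change plus with Rplus; rewrite Rplus_0_r; reflexivity.
Qed.

Lemma zsum2_lsumR N (h : Z -> Z -> R) :
  zsum2 N h = lsumR (list_prod (zrange N) (zrange N)) (fun jk => h (fst jk) (snd jk)).
Proof.
  unfold zsum2; rewrite zsumA_lsumR, <- lsumR_list_prod.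
  f_equal; apply functional_extensionality; intros j; apply zsumA_lsumR.
Qed.

Lemma zsum2_comp_inj_le N M (phi : Z * Z -> Z * Z) (h : Z -> Z -> R) :
  (forall a b, 0 <= h a b) -> FinFun.Injective phi ->
  (forall j k, (- Z.of_nat N <= j <= Z.of_nat N)%Z -> (- Z.of_nat N <= k <= Z.of_nat N)%Z ->
     (- Z.of_nat M <= fst (phi (j, k)) <= Z.of_nat M)%Z /\
     (- Z.of_nat M <= snd (phi (j, k)) <= Z.of_nat M)%Z) ->
  zsum2 N (fun j k => h (fst (phi (j, k))) (snd (phi (j, k)))) <= zsum2 M h.
Proof.
  intros Hh Hinj Hrange; rewrite !zsum2_lsumR.
  set (L := list_prod (zrange N) (zrange N)).
  apply Rle_trans with (lsumR (map phi L) (fun ab => h (fst ab) (snd ab))).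
  { rewrite lsumR_map; apply Req_le; f_equal.
    apply functional_extensionality; intros [j k]; reflexivity. }
  apply lsumR_le_incl; [intros; apply Hh | |].
  - apply FinFun.Injective_map_NoDup; [exact Hinj |].
    apply NoDup_list_prod; apply NoDup_zrange.
  - intros ab Hab; apply in_map_iff in Hab as [[j k] [<- Hjk]].
    apply in_prod_iff in Hjk as [Hj Hk]; rewrite In_zrange in Hj, Hk.
    rewrite (surjective_pairing (phi (j, k))).
    destruct (Hrange j k Hj Hk); apply in_prod; apply In_zrange; assumption.
Qed.

(* [inv_pow s 0 = 0] by the convention [rpow 0 _ = 0]. *)
Definition inv_pow (s : R) (a : Z) : R := rpow (Rabs (IZR a)) (- s).

Lemma inv_pow_opp s a : inv_pow s (- a) = inv_pow s a.
Proof. unfold inv_pow; rewrite opp_IZR, Rabs_Ropp; reflexivity. Qed.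

Lemma inv_pow_succ s n : inv_pow s (Z.of_nat (S n)) = Rpower (INR n + 1) (- s).
Proof.
  unfold inv_pow; rewrite <- INR_IZR_INZ, S_INR, Rabs_pos_eq by (pose proof (pos_INR n); lra).
  apply rpow_Rpower; pose proof (pos_INR n); lra.
Qed.

Lemma zsumA_inv_pow_le s N : 1 < s -> zsumA N (inv_pow s) <= 2 * s / (s - 1).
Proof.
  intros Hs.
  assert (Htele : forall n, zsumA (S n) (inv_pow s) + 2 * Rpower (INR n + 1) (1 - s) / (s - 1)
                            <= 2 * s / (s - 1)).
  { intros n; induction n as [| n IH].
    - rewrite zsumA_S, inv_pow_opp, inv_pow_succ; change plus with Rplus.
      unfold zsumA; rewrite sum_O; cbn -[IZR Rpower]; unfold inv_pow; rewrite Rabs_R0, rpow_0_l.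
      rewrite Rplus_0_l; unfold Rpower; rewrite ln_1, !Rmult_0_r, exp_0.
      apply Req_le; field; lra.
    - rewrite zsumA_S, inv_pow_opp, inv_pow_succ, S_INR; change plus with Rplus.
      pose proof (Rpower_sub_succ_ge s (INR n + 1) Hs ltac:(pose proof (pos_INR n); lra)).
      assert (2 * Rpower (INR n + 1 + 1) (- s) + 2 * Rpower (INR n + 1 + 1) (1 - s) / (s - 1) <=
              2 * Rpower (INR n + 1) (1 - s) / (s - 1)).
      { apply (Rmult_le_reg_l (s - 1)); [lra |]; field_simplify; [nra | lra | lra]. }
      lra. }
  destruct N as [| N].
  - unfold zsumA; rewrite sum_O; cbn -[IZR]; unfold inv_pow; rewrite Rabs_R0, rpow_0_l.
    apply Rlt_le, Rdiv_lt_0_compat; lra.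
  - assert (0 <= 2 * Rpower (INR N + 1) (1 - s) / (s - 1)).
    { apply Rmult_le_pos; [pose proof (exp_pos ((1 - s) * ln (INR N + 1))); unfold Rpower; lra |].
      left; apply Rinv_0_lt_compat; lra. }
    pose proof (Htele N); lra.
Qed.

(** * Weighted summability of [uhat] *)

Lemma nonresonant_factors j k : resonant j k = false ->
  (2 * j - k <> 0)%Z /\ (2 * j + k <> 0)%Z.
Proof.
  unfold resonant; intros H; apply Bool.orb_false_iff in H as [H1 H2].
  apply Z.eqb_neq in H1, H2; lia.
Qed.

Lemma Rabs_symbol j k :
  Rabs (IZR (4 * j * j - k * k)) = Rabs (IZR (2 * j - k)) * Rabs (IZR (2 * j + k)).
Proof. rewrite <- Rabs_mult, <- mult_IZR; do 2 f_equal; ring. Qed.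

Lemma uhat_resonant f j k : resonant j k = true -> uhat f j k = 0%C.
Proof. intros Hr; unfold uhat; rewrite Hr; reflexivity. Qed.

Lemma Cmod_uhat_nonresonant f j k : resonant j k = false ->
  Cmod (uhat f j k) = Cmod (f j k) / Rabs (IZR (4 * j * j - k * k)).
Proof.
  intros Hr; unfold uhat; rewrite Hr.
  destruct (nonresonant_factors j k Hr) as [Ha Hb].
  rewrite Cmod_div, Cmod_R; [reflexivity |].
  intros E; apply (f_equal fst) in E; unfold RtoC in E; cbn [fst] in E; apply eq_IZR in E.
  replace (4 * j * j - k * k)%Z with ((2 * j - k) * (2 * j + k))%Z in E by ring.
  apply Z.mul_eq_0 in E; tauto.
Qed.

Definition uhat_weighted_sum (f : Z -> Z -> C) (g : R) (N : nat) : R :=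
  zsum2 N (fun j k => Cmod (uhat f j k) * rpow (Rabs (IZR (4 * j * j - k * k))) g).

Lemma uhat_weighted_le p q f g j k : 0 < p -> 0 < q -> / p + / q = 1 ->
  Cmod (uhat f j k) * rpow (Rabs (IZR (4 * j * j - k * k))) g <=
  rpow (Cmod (f j k)) q + inv_pow ((1 - g) * p) (2 * j - k) * inv_pow ((1 - g) * p) (2 * j + k).
Proof.
  intros Hp Hq Hpq.
  destruct (resonant j k) eqn:Hr.
  { rewrite uhat_resonant, Cmod_0, Rmult_0_l by exact Hr.
    pose proof (rpow_nonneg (Cmod (f j k)) q); unfold inv_pow.
    pose proof (rpow_nonneg (Rabs (IZR (2 * j - k))) (- ((1 - g) * p))).
    pose proof (rpow_nonneg (Rabs (IZR (2 * j + k))) (- ((1 - g) * p))); nra. }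
  destruct (nonresonant_factors j k Hr) as [Ha Hb].
  assert (Ha' : 0 < Rabs (IZR (2 * j - k))) by (apply Rabs_pos_lt, not_0_IZR, Ha).
  assert (Hb' : 0 < Rabs (IZR (2 * j + k))) by (apply Rabs_pos_lt, not_0_IZR, Hb).
  set (m := Rabs (IZR (4 * j * j - k * k))).
  assert (Hm : 0 < m) by (unfold m; rewrite Rabs_symbol; nra).
  rewrite Cmod_uhat_nonresonant by exact Hr; fold m.
  rewrite rpow_Rpower by exact Hm.
  replace (Cmod (f j k) / m * Rpower m g) with (Cmod (f j k) * Rpower m (g - 1))
    by (rewrite <- (Rpower_mult_pred m g Hm); field; lra).
  eapply Rle_trans; [apply (young_rpow p q); [lra | lra | lra | apply Cmod_ge_0 | apply exp_pos] |].
  apply Rplus_le_compat_l, Req_le.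
  unfold inv_pow; rewrite !rpow_Rpower by assumption.
  rewrite Rpower_mult, Rpower_mult_distr by assumption.
  unfold m; rewrite Rabs_symbol; f_equal; ring.
Qed.

Lemma uhat_weighted_sum_le p q f g M : 0 < p -> 0 < q -> / p + / q = 1 -> 1 < (1 - g) * p ->
  (forall N, zsum2 N (fun j k => rpow (Cmod (f j k)) q) <= M) ->
  forall N, uhat_weighted_sum f g N <= M + (2 * ((1 - g) * p) / ((1 - g) * p - 1)) ^ 2.
Proof.
  intros Hp Hq Hpq Hs HM N; set (s := (1 - g) * p) in *.
  eapply Rle_trans; [apply zsum2_le; intros j k; apply (uhat_weighted_le p q); assumption |].
  change (zsum2 N (fun j k => plus (rpow (Cmod (f j k)) q)
                                  (inv_pow s (2 * j - k) * inv_pow s (2 * j + k)))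
          <= M + (2 * s / (s - 1)) ^ 2).
  rewrite zsum2_plus; apply Rplus_le_compat; [apply HM |].
  eapply Rle_trans.
  { apply (zsum2_comp_inj_le N (3 * N) (fun jk => (2 * fst jk - snd jk, 2 * fst jk + snd jk)%Z)
             (fun a b => inv_pow s a * inv_pow s b)).
    - intros; apply Rmult_le_pos; apply rpow_nonneg.
    - intros [j k] [j' k'] E; cbn [fst snd] in E; apply pair_equal_spec in E as [E1 E2].
      f_equal; lia.
    - intros j k Hj Hk; cbn [fst snd]; lia. }
  rewrite zsum2_mult, <- Rsqr_pow2; apply Rsqr_incr_1.
  - now apply zsumA_inv_pow_le.
  - apply zsumA_nonneg; intros; apply rpow_nonneg.
  - apply Rlt_le, Rdiv_lt_0_compat; lra.
Qed.

Lemma uhat_weighted_sum_bounded p q f g : 0 < p -> 0 < q -> / p + / q = 1 ->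
  in_lq_Z2 q f -> g < 1 - / p -> exists B, 0 <= B /\ forall N, uhat_weighted_sum f g N <= B.
Proof.
  intros Hp Hq Hpq [M HM] Hg.
  assert (Hs : 1 < (1 - g) * p) by (assert (p * / p = 1) by (field; lra); nra).
  exists (M + (2 * ((1 - g) * p) / ((1 - g) * p - 1)) ^ 2); split.
  - eapply Rle_trans; [| apply (uhat_weighted_sum_le p q f g M Hp Hq Hpq Hs HM 0)].
    apply zsum2_nonneg; intros; apply Rmult_le_pos; [apply Cmod_ge_0 | apply rpow_nonneg].
  - exact (uhat_weighted_sum_le p q f g M Hp Hq Hpq Hs HM).
Qed.

Definition fourier_term (f : Z -> Z -> C) (x t : R) (j k : Z) : C :=
  Cmult (uhat f j k) (cexpi (2 * IZR j * x + IZR k * t)).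

Lemma u_partial_zsum2 f N x t : u_partial f N x t = zsum2 N (fourier_term f x t).
Proof. reflexivity. Qed.

Lemma Rabs_le_sqrt_sum_sq u v : Rabs u <= sqrt (u ^ 2 + v ^ 2).
Proof. rewrite <- sqrt_Rsqr_abs; apply sqrt_le_1_alt; unfold Rsqr; nra. Qed.

(* For nonresonant modes [|4 j^2 - k^2| = |2j - k| |2j + k|] with both factors
   nonzero, so [2 |4 j^2 - k^2| >= |2j - k| + |2j + k| >= 2 |j| + |k|]. *)
Lemma phase_dist_le j k x t x' t' : resonant j k = false ->
  Rabs ((2 * IZR j * x + IZR k * t) - (2 * IZR j * x' + IZR k * t')) <=
  2 * Rabs (IZR (4 * j * j - k * k)) * sqrt ((x - x') ^ 2 + (t - t') ^ 2).
Proof.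
  intros Hr; destruct (nonresonant_factors j k Hr) as [Ha Hb].
  set (d := sqrt ((x - x') ^ 2 + (t - t') ^ 2)).
  assert (Hx : Rabs (x - x') <= d) by apply Rabs_le_sqrt_sum_sq.
  assert (Ht : Rabs (t - t') <= d) by (unfold d; rewrite Rplus_comm; apply Rabs_le_sqrt_sum_sq).
  assert (Hfreq : 2 * Rabs (IZR j) + Rabs (IZR k) <= 2 * Rabs (IZR (4 * j * j - k * k))).
  { rewrite <- !abs_IZR, <- mult_IZR, <- plus_IZR, <- mult_IZR; apply IZR_le.
    replace (4 * j * j - k * k)%Z with ((2 * j - k) * (2 * j + k))%Z by ring.
    rewrite Z.abs_mul; nia. }
  replace ((2 * IZR j * x + IZR k * t) - (2 * IZR j * x' + IZR k * t'))
    with (2 * IZR j * (x - x') + IZR k * (t - t')) by ring.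
  eapply Rle_trans; [apply Rabs_triang |]; rewrite !Rabs_mult, (Rabs_pos_eq 2) by lra.
  pose proof (Rabs_pos (IZR j)); pose proof (Rabs_pos (IZR k)); pose proof (Rabs_pos (x - x')).
  pose proof (Rabs_pos (t - t')); nra.
Qed.

Lemma fourier_term_dist_le f j k x t x' t' g : 0 < g <= 1 ->
  Cmod (Cminus (fourier_term f x t j k) (fourier_term f x' t' j k)) <=
  4 * rpow (sqrt ((x - x') ^ 2 + (t - t') ^ 2)) g *
  (Cmod (uhat f j k) * rpow (Rabs (IZR (4 * j * j - k * k))) g).
Proof.
  intros Hg; unfold fourier_term.
  set (a := 2 * IZR j * x + IZR k * t); set (b := 2 * IZR j * x' + IZR k * t').
  set (d := sqrt ((x - x') ^ 2 + (t - t') ^ 2)).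
  set (m := Rabs (IZR (4 * j * j - k * k))).
  replace (Cminus (Cmult (uhat f j k) (cexpi a)) (Cmult (uhat f j k) (cexpi b)))
    with (Cmult (uhat f j k) (Cminus (cexpi a) (cexpi b))) by ring.
  rewrite Cmod_mult.
  destruct (resonant j k) eqn:Hr.
  { rewrite (uhat_resonant f j k Hr), Cmod_0, !Rmult_0_l, Rmult_0_r; lra. }
  assert (Hm : 0 <= m) by apply Rabs_pos; assert (Hd : 0 <= d) by apply sqrt_pos.
  pose proof (rpow_nonneg m g); pose proof (rpow_nonneg d g).
  assert (Hphase : rpow (Rabs (a - b)) g <= 2 * rpow m g * rpow d g).
  { eapply Rle_trans.
    - apply rpow_le_compat_l; [lra | split; [apply Rabs_pos | apply phase_dist_le, Hr]].
    - fold m d; rewrite !rpow_mult_distr by nra.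
      assert (rpow 2 g <= 2).
      { rewrite rpow_Rpower by lra; rewrite <- (Rpower_1 2) at 2 by lra.
        apply Rle_Rpower; lra. }
      apply Rmult_le_compat_r; [| apply Rmult_le_compat_r]; assumption. }
  pose proof (cexpi_dist_le_rpow a b g Hg); pose proof (Cmod_ge_0 (uhat f j k)); nra.
Qed.

Lemma u_partial_dist_le f g B N x t x' t' : 0 < g <= 1 ->
  (forall N, uhat_weighted_sum f g N <= B) ->
  Cmod (Cminus (u_partial f N x t) (u_partial f N x' t')) <=
  4 * B * rpow (sqrt ((x - x') ^ 2 + (t - t') ^ 2)) g.
Proof.
  intros Hg HB; rewrite !u_partial_zsum2.
  replace (Cminus (zsum2 N (fourier_term f x t)) (zsum2 N (fourier_term f x' t')))
    with (zsum2 N (fun j k => Cminus (fourier_term f x t j k) (fourier_term f x' t' j k)))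
    by exact (zsum2_minus (G := C_AbelianGroup) N _ _).
  eapply Rle_trans; [exact (norm_zsum2_le (V := C_NormedModule) N _) |].
  eapply Rle_trans; [apply zsum2_le; intros j k; apply (fourier_term_dist_le f j k x t x' t' g Hg) |].
  rewrite zsum2_scal_l.
  pose proof (HB N); pose proof (rpow_nonneg (sqrt ((x - x') ^ 2 + (t - t') ^ 2)) g).
  unfold uhat_weighted_sum in *; nra.
Qed.

Lemma u_partial_cvg f B x t : (forall N, uhat_weighted_sum f 0 N <= B) ->
  exists y, filterlim (fun N => u_partial f N x t) eventually (locally y).
Proof.
  intros HB; apply (zsum2_cvg (V := C_CompleteNormedModule) (fourier_term f x t) B).
  intros N; eapply Rle_trans; [| apply (HB N)]; apply zsum2_le; intros j k.
  change (Cmod (fourier_term f x t j k) <=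
          Cmod (uhat f j k) * rpow (Rabs (IZR (4 * j * j - k * k))) 0).
  unfold fourier_term; rewrite Cmod_mult, Cmod_cexpi, Rmult_1_r.
  destruct (resonant j k) eqn:Hr.
  - rewrite uhat_resonant, Cmod_0 by exact Hr; lra.
  - destruct (nonresonant_factors j k Hr) as [Ha Hb].
    rewrite rpow_Rpower, Rpower_O, Rmult_1_r; [lra | |]; rewrite Rabs_symbol;
      apply Rmult_lt_0_compat; apply Rabs_pos_lt, not_0_IZR; assumption.
Qed.

Lemma u_partial_add_PI_l f N x t : u_partial f N (x + PI) t = u_partial f N x t.
Proof.
  unfold u_partial; apply zsumA_ext; intros j; apply zsumA_ext; intros k.
  rewrite <- (cexpi_add_2PI_mult (2 * IZR j * x + IZR k * t) j); do 2 f_equal; ring.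
Qed.

Lemma u_partial_add_2PI_r f N x t : u_partial f N x (t + 2 * PI) = u_partial f N x t.
Proof.
  unfold u_partial; apply zsumA_ext; intros j; apply zsumA_ext; intros k.
  rewrite <- (cexpi_add_2PI_mult (2 * IZR j * x + IZR k * t) k); do 2 f_equal; ring.
Qed.

Theorem mainTheorem2 (p q : R) (f : Z -> Z -> C) :
  0 < p -> 0 < q -> / p + / q = 1 ->
  in_lq_Z2 q f ->
  exists u : R -> R -> C,
    (forall x t : R,
       filterlim (fun N : nat => u_partial f N x t) eventually (locally (u x t))) /\
    (forall gamma : R, 0 < gamma < 1 - / p -> C_gamma gamma u).
Proof.
  intros Hp Hq Hpq Hf.
  assert (Hlim : forall x t, {y | filterlim (fun N => u_partial f N x t) eventually (locally y)}).
  { intros x t; apply constructive_indefinite_description.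
    assert (0 < / q) by (apply Rinv_0_lt_compat, Hq).
    destruct (uhat_weighted_sum_bounded p q f 0 Hp Hq Hpq Hf ltac:(lra)) as [B [_ HB]].
    exact (u_partial_cvg f B x t HB). }
  set (u x t := proj1_sig (Hlim x t)).
  assert (Hu : forall x t, filterlim (fun N => u_partial f N x t) eventually (locally (u x t)))
    by (intros; apply proj2_sig).
  exists u; split; [exact Hu |]; intros g Hg; split; [| split].
  - assert (0 < / p) by (apply Rinv_0_lt_compat, Hp).
    destruct (uhat_weighted_sum_bounded p q f g Hp Hq Hpq Hf ltac:(lra)) as [B [HB0 HB]].
    exists (4 * B); split; [lra |]; intros x t x' t'.
    apply (lim_norm_minus_le (V := C_NormedModule) _ _ _ _ _ (Hu x t) (Hu x' t')).
    intros N; apply (u_partial_dist_le f g B); [lra | exact HB].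
  - intros x t; apply (filterlim_ext_unique (V := C_NormedModule) _ _ _ _
                         (fun N => u_partial_add_PI_l f N x t) (Hu (x + PI) t) (Hu x t)).
  - intros x t; apply (filterlim_ext_unique (V := C_NormedModule) _ _ _ _
                         (fun N => u_partial_add_2PI_r f N x t) (Hu x (t + 2 * PI)) (Hu x t)).
Qed.
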